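(* Let $\hat\gamma\in M_1(\rho_*,\rho^* )$, and let $\mu$ be a smooth density with $h(\mu_0;\hat\gamma)<\infty$ and $I_0(\mu)<\infty$ satisfying properties (i)-(iv). Then $\lim_{|y|\to\infty}\sup_{t\in[0,T]}|\mu(t,y)-\hat\gamma(y)|=0$.
   Context: $T>0$ fixed; $M_1$ = measurable functions $\mathbb R\to[0,1]$; for $0<\rho_*,\rho^*<1$, $M_1(\rho_*,\rho^* )$ is the set of $\gamma\in M_1$ equal to $\rho_*$ on $(-\infty,x_*]$ and $\rho^*$ on $[x^*,\infty)$ for some $x_*\le x^*$. A density is $\mu\in D([0,T];M_1)$. $I_0(\mu)=\sup_{G\in C^{1,2}_K([0,T]\times\mathbb R)}\{\int G(T,\cdot)\mu_T-\int G(0,\cdot)\mu_0-\int_0^T\int\mu(\partial_t+\frac12\partial_x^2)G-\frac12\int_0^T\int\mu(1-\mu)G_x^2\}$; $h(\mu_0;\hat\gamma)=\int[\mu_0\log(\mu_0/\hat\gamma)+(1-\mu_0)\log((1-\mu_0)/(1-\hat\gamma))]dx$. Properties (i)-(iv): (i) $\delta\le\mu\le1-\delta$ on $[0,T]\times\mathbb R$ for some $\delta\in(0,1)$; (ii) $\mu\in C^\infty([0,T]\times\mathbb R)$; (iii) $\partial_t\mu=\frac12\partial_{xx}\mu-\partial_x[H_x\mu(1-\mu)]$ with $H_x\in C^\infty_K([0,T]\times\mathbb R)$; (iv) $\|\partial_x^k\partial_t^l\mu\|_{L^\infty([0,T]\times\mathbb R)}<\infty$ for $k,l\ge1$. *)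

From Stdlib Require Import Reals Lra.
Open Scope R_scope.

Definition outer_le (A : R -> Prop) (c : R) : Prop :=
  forall eps, 0 < eps ->
  exists a b : nat -> R,
    (forall n, a n <= b n) /\
    (forall x, A x -> exists n, a n < x < b n) /\
    (forall N, sum_f_R0 (fun n => b n - a n) N <= c + eps).

Definition outer_is (A : R -> Prop) (v : R) : Prop :=
  outer_le A v /\ forall c, outer_le A c -> v <= c.

Definition null_set (A : R -> Prop) : Prop := outer_le A 0.

Definition leb_measurable_set (A : R -> Prop) : Prop :=
  forall (E : R -> Prop) (c : R), outer_le E c ->
    exists c1 c2, outer_le (fun x => E x /\ A x) c1 /\
                  outer_le (fun x => E x /\ ~ A x) c2 /\ c1 + c2 <= c.

Definition leb_measurable_fun (f : R -> R) : Prop :=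
  forall a, leb_measurable_set (fun x => a < f x).

(* Finiteness of the Lebesgue integral of a (a.e.) nonnegative measurable f,
   via the layer-cake formula  int f = int_0^oo |{f > s}| ds, expressed as
   boundedness of the lower sums  sum_k (s_{k+1}-s_k) |{f > s_{k+1}}|. *)
Definition nonneg_integral_finite (f : R -> R) : Prop :=
  (forall s, 0 < s -> exists v, outer_is (fun x => s < f x) v) /\
  exists M, forall (n : nat) (s v : nat -> R),
    s 0%nat = 0 ->
    (forall k, (k <= n)%nat -> s k < s (S k)) ->
    (forall k, (k <= n)%nat -> outer_is (fun x => s (S k) < f x) (v (S k))) ->
    sum_f_R0 (fun k => (s (S k) - s k) * v (S k)) n <= M.

Definition in_M1 (g : R -> R) : Prop :=
  leb_measurable_fun g /\ forall x, 0 <= g x <= 1.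

Definition in_M1_rho (rho_lo rho_hi : R) (g : R -> R) : Prop :=
  in_M1 g /\
  exists xlo xhi, xlo <= xhi /\
    (forall x, x <= xlo -> g x = rho_lo) /\
    (forall x, xhi <= x -> g x = rho_hi).

(* pointwise integrand (with Stdlib's total ln; values on the set where the
   true integrand is +oo are irrelevant since that set is required null) *)
Definition entropy_density (mu0 g : R -> R) (x : R) : R :=
  mu0 x * ln (mu0 x / g x) + (1 - mu0 x) * ln ((1 - mu0 x) / (1 - g x)).

Definition entropy_infinite_set (mu0 g : R -> R) (x : R) : Prop :=
  (0 < mu0 x /\ g x = 0) \/ (mu0 x < 1 /\ g x = 1).

Definition entropy_finite (mu0 g : R -> R) : Prop :=
  null_set (entropy_infinite_set mu0 g) /\
  nonneg_integral_finite (entropy_density mu0 g).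

Definition continuous2 (f : R -> R -> R) : Prop :=
  forall t x eps, 0 < eps -> exists d, 0 < d /\
    forall s y, Rabs (s - t) < d -> Rabs (y - x) < d ->
      Rabs (f s y - f t x) < eps.

(* D k l = d_x^k d_t^l f ; all jointly continuous: f is C^oo *)
Definition smooth_family (f : R -> R -> R) (D : nat -> nat -> R -> R -> R) : Prop :=
  (forall t x, D 0%nat 0%nat t x = f t x) /\
  (forall k l t x, derivable_pt_lim (fun y => D k l t y) x (D (S k) l t x)) /\
  (forall k l t x, derivable_pt_lim (fun s => D k l s x) t (D k (S l) t x)) /\
  (forall k l, continuous2 (D k l)).

Definition smooth2 (f : R -> R -> R) : Prop := exists D, smooth_family f D.

Definition compact_support_strip (T : R) (f : R -> R -> R) : Prop :=
  exists L, forall t x, 0 <= t <= T -> L < Rabs x -> f t x = 0.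

Definition C12K (T : R) (G Gt Gx Gxx : R -> R -> R) : Prop :=
  (forall t x, derivable_pt_lim (fun s => G s x) t (Gt t x)) /\
  (forall t x, derivable_pt_lim (fun y => G t y) x (Gx t x)) /\
  (forall t x, derivable_pt_lim (fun y => Gx t y) x (Gxx t x)) /\
  continuous2 G /\ continuous2 Gt /\ continuous2 Gx /\ continuous2 Gxx /\
  compact_support_strip T G.

Definition riem1 (f : R -> R) (a b v : R) : Prop :=
  exists pr : Riemann_integrable f a b, RiemannInt pr = v.

Definition riem2 (g : R -> R -> R) (a b c d v : R) : Prop :=
  exists inner : R -> R,
    (forall t, a <= t <= b -> riem1 (g t) c d (inner t)) /\ riem1 inner a b v.

Definition I0_finite (T : R) (mu : R -> R -> R) : Prop :=
  exists M, forall G Gt Gx Gxx, C12K T G Gt Gx Gxx ->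
    forall L, (forall t x, 0 <= t <= T -> L < Rabs x -> G t x = 0) ->
    forall v1 v2 v3 v4,
      riem1 (fun x => G T x * mu T x) (- L) L v1 ->
      riem1 (fun x => G 0 x * mu 0 x) (- L) L v2 ->
      riem2 (fun t x => mu t x * (Gt t x + / 2 * Gxx t x)) 0 T (- L) L v3 ->
      riem2 (fun t x => mu t x * (1 - mu t x) * (Gx t x) ^ 2) 0 T (- L) L v4 ->
      v1 - v2 - v3 - / 2 * v4 <= M.

(* Outside the compact support of [H] the density solves the heat equation
   [d_t mu = d_x^2 mu / 2]. Differentiating it, [d_x^3 mu_0 = 2 d_x d_t mu_0] is bounded there,
   so by Landau's interpolation inequality ([mu_0] being bounded) [mu_0] is Lipschitz far out.
   The entropy density is at least [delta/2 (mu_0 - gamma)^2], so if [mu_0] did not approach the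
   constant values [rho_*], [rho^*] of [gamma], some level set of the entropy density would contain
   infinitely many disjoint intervals of a fixed length, contradicting its finite outer measure.
   Finally a parabolic comparison with the barrier [c + t/D^2 + (x - y)^2/D^2] on the box
   [[0, T] x [y - D, y + D]] propagates this closeness at time 0 to all times [t <= T]. *)

From Stdlib Require Import Reals Lra Lia Psatz Classical FunctionalExtensionality ClassicalEpsilon.
Open Scope R_scope.

(** * Calculus on the line *)

Lemma derivable_pt_lim_sub_quadratic (f : R -> R) x l a b q c :
  derivable_pt_lim f x l ->
  derivable_pt_lim (fun w => f w - (a + b * (w - c) + q * ((w - c) * (w - c)))) x
    (l - (b + q * (2 * (x - c)))).
Proof.
  intros Hf.
  pose proof (derivable_pt_lim_minus _ _ x _ _
    (derivable_pt_lim_id x) (derivable_pt_lim_const c x)) as Hlin.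
  pose proof (derivable_pt_lim_mult _ _ x _ _ Hlin Hlin) as Hsq.
  pose proof (derivable_pt_lim_minus _ _ x _ _ Hf
    (derivable_pt_lim_plus _ _ x _ _
      (derivable_pt_lim_plus _ _ x _ _ (derivable_pt_lim_const a x)
         (derivable_pt_lim_scal _ b x _ Hlin))
      (derivable_pt_lim_scal _ q x _ Hsq))) as H.
  unfold minus_fct, plus_fct, mult_fct, mult_real_fct, fct_cte, id in H.
  replace (l - (b + q * (2 * (x - c)))) with
    (l - (0 + b * (1 - 0) + q * ((1 - 0) * (x - c) + (x - c) * (1 - 0)))) by ring.
  exact H.
Qed.

Lemma derivable_pt_lim_quadratic_sub (f : R -> R) x l a b q c :
  derivable_pt_lim f x l ->
  derivable_pt_lim (fun w => a + b * (w - c) + q * ((w - c) * (w - c)) - f w) x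
    (b + q * (2 * (x - c)) - l).
Proof.
  intros Hf.
  pose proof (derivable_pt_lim_opp _ _ _ (derivable_pt_lim_sub_quadratic f x l a b q c Hf)) as H.
  replace (b + q * (2 * (x - c)) - l) with (- (l - (b + q * (2 * (x - c))))) by ring.
  refine (derivable_pt_lim_ext _ _ x _ _ H); intro w; unfold opp_fct; ring.
Qed.

Lemma Rabs_le_between a b : Rabs a <= b -> - b <= a <= b.
Proof. unfold Rabs; destruct Rcase_abs; lra. Qed.

Lemma derivative_nonpos_at_left_min (f : R -> R) x l h0 :
  derivable_pt_lim f x l -> 0 < h0 ->
  (forall h, 0 < h <= h0 -> f x <= f (x - h)) -> l <= 0.
Proof.
  intros Hf Hh0 Hmin. destruct (Rle_dec l 0) as [|Hl]; auto. exfalso.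
  destruct (Hf l ltac:(lra)) as [del Hdel]. pose proof (cond_pos del).
  set (h := Rmin (del / 2) h0).
  assert (Hh : 0 < h <= del / 2 /\ h <= h0)
    by (unfold h; split; [split; [apply Rmin_pos|apply Rmin_l]|apply Rmin_r]; lra).
  specialize (Hdel (- h) ltac:(lra) ltac:(rewrite Rabs_Ropp, Rabs_pos_eq; lra)).
  specialize (Hmin h ltac:(lra)).
  replace (x + - h) with (x - h) in Hdel by ring.
  assert ((f (x - h) - f x) / - h <= 0).
  { unfold Rdiv. assert (/ - h < 0) by (apply Rinv_lt_0_compat; lra). nra. }
  apply Rabs_def2 in Hdel. lra.
Qed.

Lemma second_derivative_nonneg_at_right_min (f f' : R -> R) x l h0 :
  (forall w, derivable_pt_lim f w (f' w)) -> derivable_pt_lim f' x l -> f' x <= 0 -> 0 < h0 ->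
  (forall h, 0 < h <= h0 -> f x <= f (x + h)) -> 0 <= l.
Proof.
  intros Hf Hf' Hx Hh0 Hmin. destruct (Rle_dec 0 l) as [|Hl]; auto. exfalso.
  destruct (Hf' (- l / 2) ltac:(lra)) as [del Hdel]. pose proof (cond_pos del).
  set (h := Rmin (del / 2) h0).
  assert (Hh : 0 < h <= del / 2 /\ h <= h0)
    by (unfold h; split; [split; [apply Rmin_pos|apply Rmin_l]|apply Rmin_r]; lra).
  destruct (MVT_cor2 f f' x (x + h)) as [c [Hc Hcx]]; [lra|intros; apply Hf|].
  specialize (Hdel (c - x) ltac:(lra) ltac:(rewrite Rabs_pos_eq; lra)).
  replace (x + (c - x)) with c in Hdel by ring.
  apply Rabs_def2 in Hdel.
  assert (Hslope : f' c - f' x < 0).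
  { apply (Rmult_lt_reg_r (/ (c - x))); [apply Rinv_0_lt_compat; lra|].
    rewrite Rmult_0_l. unfold Rdiv in Hdel. lra. }
  specialize (Hmin h ltac:(lra)).
  assert (f' c * (x + h - x) < 0) by (apply Rmult_neg_pos; lra).
  lra.
Qed.

Definition between (a b y : R) : Prop := Rmin a b <= y <= Rmax a b.

Lemma between_trans x z y w : between x z y -> between x y w -> between x z w.
Proof. unfold between, Rmin, Rmax; repeat destruct Rle_dec; lra. Qed.

Lemma between_dist x z y : between x z y -> Rabs (y - x) <= Rabs (z - x).
Proof.
  unfold between, Rmin, Rmax, Rabs; repeat destruct Rle_dec; repeat destruct Rcase_abs; lra.
Qed.

Lemma between_left x z : between x z x.
Proof. unfold between, Rmin, Rmax; destruct Rle_dec; lra. Qed.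

Lemma between_right x z : between x z z.
Proof. unfold between, Rmin, Rmax; destruct Rle_dec; lra. Qed.

Lemma mvt_abs_le (f f' : R -> R) a b K :
  (forall y, between a b y -> derivable_pt_lim f y (f' y)) ->
  (forall y, between a b y -> Rabs (f' y) <= K) -> Rabs (f b - f a) <= K * Rabs (b - a).
Proof.
  intros Hd Hb. destruct (MVT_abs f f' a b Hd) as [c [-> Hc]].
  apply Rmult_le_compat_r; [apply Rabs_pos|apply Hb, Hc].
Qed.

Lemma abs_sub_le_near (g g' : R -> R) x h K :
  (forall y, between x (x + h) y -> derivable_pt_lim g y (g' y)) ->
  (forall y, between x (x + h) y -> Rabs (g' y) <= K) ->
  forall y, between x (x + h) y -> Rabs (g y - g x) <= K * Rabs h.
Proof.
  intros Hd Hb y Hy.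
  assert (HK : 0 <= K) by (pose proof (Hb x (between_left _ _)); pose proof (Rabs_pos (g' x)); lra).
  pose proof (between_dist _ _ _ Hy) as Hdist. replace (x + h - x) with h in Hdist by ring.
  eapply Rle_trans; [|apply Rmult_le_compat_l; [exact HK|exact Hdist]].
  apply (mvt_abs_le g g'); intros w Hw; [apply Hd|apply Hb]; eapply between_trans; eauto.
Qed.

Lemma taylor2_remainder_le (f0 f1 f2 f3 : R -> R) x h C :
  (forall y, derivable_pt_lim f0 y (f1 y)) -> (forall y, derivable_pt_lim f1 y (f2 y)) ->
  (forall y, derivable_pt_lim f2 y (f3 y)) ->
  (forall y, between x (x + h) y -> Rabs (f3 y) <= C) ->
  Rabs (f0 (x + h) - f0 x - f1 x * h - f2 x * h * h / 2) <= C * Rabs h * Rabs h * Rabs h.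
Proof.
  intros D0 D1 D2 Hb.
  pose proof (abs_sub_le_near f2 f3 x h C (fun y _ => D2 y) Hb) as E2.
  (* the remainders of order one and two at [x]; the first is the derivative of the second *)
  set (r1 := fun w => f1 w - (f1 x + f2 x * (w - x) + 0 * ((w - x) * (w - x)))).
  set (r2 := fun w => f0 w - (f0 x + f1 x * (w - x) + f2 x / 2 * ((w - x) * (w - x)))).
  pose proof (abs_sub_le_near r1 (fun w => f2 w - (f2 x + 0 * (2 * (w - x)))) x h (C * Rabs h)
    (fun y _ => derivable_pt_lim_sub_quadratic _ _ _ _ _ _ _ (D1 y))) as E1.
  pose proof (abs_sub_le_near r2 (fun w => f1 w - (f1 x + f2 x / 2 * (2 * (w - x)))) x h
    (C * Rabs h * Rabs h) (fun y _ => derivable_pt_lim_sub_quadratic _ _ _ _ _ _ _ (D0 y))) as E0.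
  replace (f0 (x + h) - f0 x - f1 x * h - f2 x * h * h / 2) with (r2 (x + h) - r2 x)
    by (unfold r2; field).
  apply E0; [|apply between_right].
  intros y Hy. replace (f1 y - (f1 x + f2 x / 2 * (2 * (y - x)))) with (r1 y - r1 x)
    by (unfold r1; field).
  apply E1; auto. intros w Hw.
  replace (f2 w - (f2 x + 0 * (2 * (w - x)))) with (f2 w - f2 x) by ring. auto.
Qed.

(* Landau's interpolation inequality at unit scale: eliminating [f2 x] between the Taylor
   expansions at [x + h] and [x + 2 h] expresses [f1 x] through differences of [f0]. *)
Lemma landau_derivative_le (f0 f1 f2 f3 : R -> R) x h C :
  (forall y, derivable_pt_lim f0 y (f1 y)) -> (forall y, derivable_pt_lim f1 y (f2 y)) ->
  (forall y, derivable_pt_lim f2 y (f3 y)) -> Rabs h = 1 ->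
  (forall y, between x (x + 2 * h) y -> Rabs (f3 y) <= C) ->
  (forall a b, Rabs (f0 a - f0 b) <= 1) ->
  Rabs (f1 x) <= (5 + 12 * C) / 2.
Proof.
  intros D0 D1 D2 Hh Hb Hf.
  pose proof (taylor2_remainder_le f0 f1 f2 f3 x h C D0 D1 D2) as T1.
  pose proof (taylor2_remainder_le f0 f1 f2 f3 x (2 * h) C D0 D1 D2 Hb) as T2.
  rewrite Hh in T1. rewrite Rabs_mult, Hh, (Rabs_pos_eq 2) in T2 by lra.
  assert (T1' : Rabs (f0 (x + h) - f0 x - f1 x * h - f2 x * h * h / 2) <= C).
  { replace C with (C * 1 * 1 * 1) by ring. apply T1.
    intros y Hy. apply Hb. revert Hy. unfold between, Rmin, Rmax.
    repeat destruct Rle_dec; lra. }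
  assert (Hh0 : h <> 0) by (intro; subst; rewrite Rabs_R0 in Hh; lra).
  assert (E : f1 x = / (2 * h) * (4 * (f0 (x + h) - f0 x) - (f0 (x + 2 * h) - f0 x)
     - 4 * (f0 (x + h) - f0 x - f1 x * h - f2 x * h * h / 2)
     + (f0 (x + 2 * h) - f0 x - f1 x * (2 * h) - f2 x * (2 * h) * (2 * h) / 2)))
    by (field; auto).
  rewrite E, Rabs_mult, Rabs_inv, Rabs_mult, Hh, (Rabs_pos_eq 2) by lra.
  pose proof (Hf (x + h) x). pose proof (Hf (x + 2 * h) x).
  set (c := f0 (x + h) - f0 x - f1 x * h - f2 x * h * h / 2) in *.
  set (d := f0 (x + 2 * h) - f0 x - f1 x * (2 * h) - f2 x * (2 * h) * (2 * h) / 2) in *.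
  set (a := f0 (x + h) - f0 x) in *. set (b := f0 (x + 2 * h) - f0 x) in *.
  assert (Rabs (4 * a - b - 4 * c + d) <= 4 * Rabs a + Rabs b + 4 * Rabs c + Rabs d)
    by (unfold Rabs; repeat destruct Rcase_abs; lra).
  replace (/ (2 * 1)) with (/ 2) by field. lra.
Qed.

(** * Real induction and compactness *)

Lemma continuity_pt_eps_delta (f : R -> R) x :
  continuity_pt f x <->
  forall eps, 0 < eps -> exists d, 0 < d /\ forall y, Rabs (y - x) < d -> Rabs (f y - f x) < eps.
Proof.
  split.
  - intros H eps Heps. destruct (H eps Heps) as [d [Hd H2]]. exists d. split; [lra|].
    intros y Hy. destruct (Req_dec y x) as [->|Hne].
    + rewrite Rminus_diag, Rabs_R0; lra.
    + apply (H2 y). repeat split; auto.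
  - intros H eps Heps. destruct (H eps Heps) as [d [Hd H2]]. exists d. split; [lra|].
    intros y [_ Hy]. apply H2; exact Hy.
Qed.

Lemma real_induction (P : R -> R -> Prop) a b : a <= b ->
  (forall u v w, u <= v <= w -> P u v -> P v w -> P u w) ->
  (forall y, a <= y <= b -> exists d, 0 < d /\
     forall u v, y - d < u <= y -> y <= v < y + d -> P u v) ->
  P a b.
Proof.
  intros Hab Hadd Hloc.
  set (E := fun x => a <= x <= b /\ P a x).
  assert (HPaa : P a a).
  { destruct (Hloc a) as [d [Hd Hd2]]; [lra|]. apply Hd2; lra. }
  destruct (completeness E) as [s [Hub Hlub]].
  { exists b. intros x [Hx _]. lra. }
  { exists a. split; [lra|auto]. }
  assert (Has : a <= s) by (apply Hub; split; [lra|auto]).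
  assert (Hsb : s <= b) by (apply Hlub; intros x [Hx _]; lra).
  destruct (Hloc s (conj Has Hsb)) as [d [Hd Hd2]].
  assert (Hx : exists x, E x /\ s - d < x).
  { apply NNPP. intro Hn. assert (s <= s - d); [|lra].
    apply Hlub. intros x Ex. apply Rnot_lt_le. intro. apply Hn. exists x. auto. }
  destruct Hx as [x [[Hx1 Hx2] Hx3]].
  assert (Hxs : x <= s) by (apply Hub; split; auto).
  set (v := Rmin b (s + d / 2)).
  assert (Hv : v <= b /\ v <= s + d / 2 /\ s <= v)
    by (unfold v; repeat split; [apply Rmin_l|apply Rmin_r|apply Rmin_glb; lra]).
  assert (HPav : P a v) by (apply Hadd with x; [lra|auto|apply Hd2; lra]).
  assert (Hvs : v <= s) by (apply Hub; split; [lra|auto]).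
  replace b with v; auto.
  unfold v in *. unfold Rmin in *. destruct (Rle_dec b (s + d / 2)); lra.
Qed.

Lemma continuous2_uniform_in_space (z : R -> R -> R) t0 a b eps :
  continuous2 z -> a <= b -> 0 < eps ->
  exists del, 0 < del /\ forall s x, Rabs (s - t0) < del -> a <= x <= b ->
    Rabs (z s x - z t0 x) < eps.
Proof.
  intros Hc Hab He.
  apply (real_induction (fun u v => exists del, 0 < del /\ forall s x,
    Rabs (s - t0) < del -> u <= x <= v -> Rabs (z s x - z t0 x) < eps)); auto.
  - intros u v w Huvw [d1 [Hd1 H1]] [d2 [Hd2 H2]]. exists (Rmin d1 d2).
    split; [apply Rmin_pos; auto|].
    pose proof (Rmin_l d1 d2). pose proof (Rmin_r d1 d2).
    intros s x Hs Hx. destruct (Rle_dec x v); [apply H1|apply H2]; lra.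
  - intros y Hy. destruct (Hc t0 y (eps / 2)) as [d [Hd H]]; [lra|].
    exists d. split; auto. intros u v Hu Hv. exists d. split; auto.
    intros s x Hs Hx.
    assert (Hxy : Rabs (x - y) < d) by (apply Rabs_def1; lra).
    pose proof (H s x Hs Hxy) as A1.
    pose proof (H t0 x ltac:(rewrite Rminus_diag, Rabs_R0; lra) Hxy) as A2.
    apply Rabs_def2 in A1. apply Rabs_def2 in A2. apply Rabs_def1; lra.
Qed.

Lemma continuous2_add_sub (P Q : R -> R) (u : R -> R -> R) :
  (forall t, continuity_pt P t) -> (forall x, continuity_pt Q x) -> continuous2 u ->
  continuous2 (fun s x => P s + Q x - u s x).
Proof.
  intros HP HQ Hu t x eps Heps.
  destruct (Hu t x (eps / 3)) as [d0 [Hd0 H0]]; [lra|].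
  destruct (proj1 (continuity_pt_eps_delta P t) (HP t) (eps / 3)) as [d1 [Hd1 H1]]; [lra|].
  destruct (proj1 (continuity_pt_eps_delta Q x) (HQ x) (eps / 3)) as [d2 [Hd2 H2]]; [lra|].
  exists (Rmin d0 (Rmin d1 d2)). split; [repeat apply Rmin_pos; auto|].
  intros s w Hs Hw.
  pose proof (Rmin_l d0 (Rmin d1 d2)). pose proof (Rmin_r d0 (Rmin d1 d2)).
  pose proof (Rmin_l d1 d2). pose proof (Rmin_r d1 d2).
  pose proof (H0 s w ltac:(lra) ltac:(lra)) as A0.
  pose proof (H1 s ltac:(lra)) as A1. pose proof (H2 w ltac:(lra)) as A2.
  apply Rabs_def2 in A0. apply Rabs_def2 in A1. apply Rabs_def2 in A2. apply Rabs_def1; lra.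
Qed.

Lemma continuous2_attains_min_on_rectangle (z : R -> R -> R) T a b :
  0 <= T -> a <= b -> continuous2 z ->
  exists ts xs, 0 <= ts <= T /\ a <= xs <= b /\
    forall t x, 0 <= t <= T -> a <= x <= b -> z ts xs <= z t x.
Proof.
  intros HT Hab Hc.
  assert (Hxm : forall t, exists mx, (forall c, a <= c <= b -> z t mx <= z t c) /\ a <= mx <= b).
  { intro t. apply continuity_ab_min; auto. intros c _.
    apply continuity_pt_eps_delta. intros eps Heps.
    destruct (Hc t c eps Heps) as [d [Hd H]]. exists d. split; auto.
    intros y Hy. apply H; auto. rewrite Rminus_diag, Rabs_R0; lra. }
  destruct (choice _ Hxm) as [xm Hxms].
  set (g := fun t => z t (xm t)).
  assert (Hgc : forall t, continuity_pt g t).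
  { intro t. apply continuity_pt_eps_delta. intros eps Heps.
    destruct (continuous2_uniform_in_space z t a b (eps / 2) Hc Hab ltac:(lra)) as [d [Hd H]].
    exists d. split; auto. intros s Hs. unfold g.
    destruct (Hxms s) as [Hs1 Hs2]. destruct (Hxms t) as [Ht1 Ht2].
    pose proof (H s (xm s) Hs Hs2) as A1. pose proof (H s (xm t) Hs Ht2) as A2.
    pose proof (Hs1 (xm t) Ht2). pose proof (Ht1 (xm s) Hs2).
    apply Rabs_def2 in A1. apply Rabs_def2 in A2. apply Rabs_def1; lra. }
  destruct (continuity_ab_min g 0 T HT (fun c _ => Hgc c)) as [ts [Hts1 Hts2]].
  exists ts, (xm ts). split; [auto|split; [apply Hxms|]].
  intros t x Ht Hx. apply Rle_trans with (g t); [apply Hts1; auto|apply (proj1 (Hxms t)); auto].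
Qed.

(** * The heat equation on a box *)

(* Weak minimum principle for strict supersolutions of the heat equation [z_t = z_xx / 2]:
   at an interior negative minimum we would have [z_t <= 0], [z_x = 0] and [z_xx >= 0]. *)
Lemma heat_strict_supersolution_nonneg (z zt zx zxx : R -> R -> R) T a b :
  0 < T -> a < b -> continuous2 z ->
  (forall t x, derivable_pt_lim (fun s => z s x) t (zt t x)) ->
  (forall t x, derivable_pt_lim (fun w => z t w) x (zx t x)) ->
  (forall t x, derivable_pt_lim (fun w => zx t w) x (zxx t x)) ->
  (forall t x, 0 < t <= T -> a < x < b -> / 2 * zxx t x < zt t x) ->
  (forall x, a <= x <= b -> 0 <= z 0 x) ->
  (forall t, 0 <= t <= T -> 0 <= z t a /\ 0 <= z t b) ->
  forall t x, 0 <= t <= T -> a <= x <= b -> 0 <= z t x.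
Proof.
  intros HT Hab Hc Hzt Hzx Hzxx Hpde Hinit Hbd.
  destruct (continuous2_attains_min_on_rectangle z T a b ltac:(lra) ltac:(lra) Hc)
    as [ts [xs [Hts [Hxs Hmin]]]].
  intros t x Ht Hx. apply Rle_trans with (z ts xs); [|apply Hmin; auto].
  apply Rnot_lt_le. intro Hneg.
  assert (Hts0 : 0 < ts).
  { destruct (Req_dec ts 0) as [E|E]; [|lra]. subst. pose proof (Hinit xs Hxs). lra. }
  assert (Hxab : a < xs < b).
  { pose proof (Hbd ts Hts). destruct (Req_dec xs a) as [->|]; [lra|].
    destruct (Req_dec xs b) as [->|]; lra. }
  assert (Ht1 : zt ts xs <= 0).
  { apply (derivative_nonpos_at_left_min (fun s => z s xs) ts _ ts); auto.
    intros h Hh. apply Hmin; lra. }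
  assert (Hx1 : zx ts xs <= 0).
  { apply (derivative_nonpos_at_left_min (fun w => z ts w) xs _ (xs - a)); auto; [lra|].
    intros h Hh. apply Hmin; lra. }
  assert (Hx2 : 0 <= zxx ts xs).
  { apply (second_derivative_nonneg_at_right_min (fun w => z ts w) (fun w => zx ts w) xs _
      (b - xs)); auto; [lra|].
    intros h Hh. apply Hmin; lra. }
  pose proof (Hpde ts xs ltac:(lra) Hxab). lra.
Qed.

Section HeatBox.

Variables (u ut ux uxx : R -> R -> R) (T y D : R).
Hypotheses (HT : 0 < T) (HD : 0 < D) (Hu : continuous2 u)
  (Hut : forall t x, derivable_pt_lim (fun s => u s x) t (ut t x))
  (Hux : forall t x, derivable_pt_lim (fun w => u t w) x (ux t x))
  (Huxx : forall t x, derivable_pt_lim (fun w => ux t w) x (uxx t x))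
  (Hheat : forall t x, 0 <= t <= T -> y - D <= x <= y + D -> ut t x = / 2 * uxx t x)
  (Hle1 : forall t x, 0 <= t <= T -> y - D <= x <= y + D -> u t x <= 1).

(* [c + (1/D^2 + k) t + (x - y)^2 / D^2] is a strict supersolution that dominates [u] on the
   parabolic boundary of the box. *)
Lemma heat_barrier_le c k :
  0 <= c -> 0 < k -> (forall x, y - D <= x <= y + D -> u 0 x <= c) ->
  forall t, 0 <= t <= T -> u t y <= c + (/ (D * D) + k) * t.
Proof.
  intros Hc Hk Hinit t Ht.
  set (iD := / (D * D)).
  assert (HiD : 0 < iD) by (unfold iD; apply Rinv_0_lt_compat; nra).
  set (z := fun s x => c + (iD + k) * s + iD * ((x - y) * (x - y)) - u s x).
  assert (Hz : 0 <= z t y).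
  { apply (heat_strict_supersolution_nonneg z (fun s x => iD + k - ut s x)
      (fun s x => iD * (2 * (x - y)) - ux s x) (fun s x => 2 * iD - uxx s x) T (y - D) (y + D));
      auto; try lra.
    - apply (continuous2_add_sub (fun s => c + (iD + k) * s) (fun x => iD * ((x - y) * (x - y))) u);
        auto; intros; reg.
    - intros s x. replace (iD + k - ut s x) with (iD + k + 0 * (2 * (s - 0)) - ut s x) by ring.
      refine (derivable_pt_lim_ext _ _ _ _ _ (derivable_pt_lim_quadratic_sub _ s _
        (c + iD * ((x - y) * (x - y))) (iD + k) 0 0 (Hut s x))).
      intro; unfold z; cbv beta; ring.
    - intros s x.
      replace (iD * (2 * (x - y)) - ux s x) with (0 + iD * (2 * (x - y)) - ux s x) by ring.
      refine (derivable_pt_lim_ext _ _ _ _ _ (derivable_pt_lim_quadratic_sub _ x _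
        (c + (iD + k) * s) 0 iD y (Hux s x))).
      intro; unfold z; cbv beta; ring.
    - intros s x. replace (2 * iD - uxx s x) with (2 * iD + 0 * (2 * (x - y)) - uxx s x) by ring.
      refine (derivable_pt_lim_ext _ _ _ _ _ (derivable_pt_lim_quadratic_sub _ x _
        0 (2 * iD) 0 y (Huxx s x))).
      intro; ring.
    - intros s x Hs Hx. rewrite Hheat by lra. lra.
    - intros x Hx. unfold z. pose proof (Hinit x Hx).
      assert (0 <= iD * ((x - y) * (x - y))) by (apply Rmult_le_pos; [lra|apply Rle_0_sqr]). lra.
    - intros s Hs. unfold z.
      pose proof (Hle1 s (y - D) Hs ltac:(lra)). pose proof (Hle1 s (y + D) Hs ltac:(lra)).
      replace ((y - D - y) * (y - D - y)) with (D * D) by ring.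
      replace ((y + D - y) * (y + D - y)) with (D * D) by ring.
      unfold iD. rewrite Rinv_l by nra.
      assert (0 <= (/ (D * D) + k) * s) by (apply Rmult_le_pos; unfold iD in HiD; lra).
      split; lra. }
  unfold z in Hz. replace ((y - y) * (y - y)) with 0 in Hz by ring. lra.
Qed.

Lemma heat_barrier_bound c :
  0 <= c -> (forall x, y - D <= x <= y + D -> u 0 x <= c) ->
  forall t, 0 <= t <= T -> u t y <= c + t / (D * D).
Proof.
  intros Hc Hinit t Ht. apply le_epsilon. intros eps Heps.
  set (k := eps / (T + 1)).
  assert (Hk : 0 < k) by (unfold k; apply Rdiv_lt_0_compat; lra).
  pose proof (heat_barrier_le c k Hc Hk Hinit t Ht).
  assert (k * t <= eps).
  { apply Rle_trans with (k * (T + 1)); [apply Rmult_le_compat_l; lra|].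
    unfold k; right; field; lra. }
  unfold Rdiv. lra.
Qed.

End HeatBox.

Lemma heat_solution_stays_close (u ut ux uxx : R -> R -> R) T y D rho a :
  0 < T -> 0 < D -> 0 <= rho <= 1 -> 0 <= a -> continuous2 u ->
  (forall t x, derivable_pt_lim (fun s => u s x) t (ut t x)) ->
  (forall t x, derivable_pt_lim (fun w => u t w) x (ux t x)) ->
  (forall t x, derivable_pt_lim (fun w => ux t w) x (uxx t x)) ->
  (forall t x, 0 <= t <= T -> y - D <= x <= y + D -> ut t x = / 2 * uxx t x) ->
  (forall t x, 0 <= t <= T -> y - D <= x <= y + D -> 0 <= u t x <= 1) ->
  (forall x, y - D <= x <= y + D -> Rabs (u 0 x - rho) <= a) ->
  forall t, 0 <= t <= T -> Rabs (u t y - rho) <= a + t / (D * D).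
Proof.
  intros HT HD Hrho Ha Hu Hut Hux Huxx Hheat Hu01 Hinit t Ht.
  assert (Hone_minus : forall (f : R -> R) x l,
    derivable_pt_lim f x l -> derivable_pt_lim (fun w => 1 - f w) x (- l)).
  { intros f x l Hf. replace (- l) with (0 + 0 * (2 * (x - 0)) - l) by ring.
    refine (derivable_pt_lim_ext _ _ _ _ _ (derivable_pt_lim_quadratic_sub f x l 1 0 0 0 Hf)).
    intro; ring. }
  assert (Hcont : continuous2 (fun s x => 1 - u s x)).
  { intros s x e He. destruct (Hu s x e He) as [d [Hd H]]. exists d. split; auto.
    intros s' x' Hs Hx. rewrite <- Rabs_Ropp.
    replace (- (1 - u s' x' - (1 - u s x))) with (u s' x' - u s x) by ring. auto. }
  pose proof (heat_barrier_bound u ut ux uxx T y D HT HD Hu Hut Hux Huxx Hheat) as Hup.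
  pose proof (heat_barrier_bound (fun s x => 1 - u s x) (fun s x => - ut s x) (fun s x => - ux s x)
    (fun s x => - uxx s x) T y D HT HD Hcont
    (fun s x => Hone_minus _ _ _ (Hut s x)) (fun s x => Hone_minus _ _ _ (Hux s x))) as Hdown.
  assert (Hu' : u t y <= rho + a + t / (D * D)).
  { apply Hup; auto; try lra.
    - intros s x Hs Hx. apply Hu01; auto.
    - intros x Hx. pose proof (Rabs_le_between _ _ (Hinit x Hx)). lra. }
  assert (Hd' : 1 - u t y <= 1 - rho + a + t / (D * D)).
  { apply Hdown; auto; try lra.
    - intros s x. refine (derivable_pt_lim_ext _ _ _ _ _ (derivable_pt_lim_opp _ _ _ (Huxx s x))).
      intro; reflexivity.
    - intros s x Hs Hx. rewrite Hheat by auto. ring.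
    - intros s x Hs Hx. pose proof (Hu01 s x Hs Hx). lra.
    - intros x Hx. pose proof (Rabs_le_between _ _ (Hinit x Hx)). lra. }
  apply Rabs_le. lra.
Qed.

(** * Relative entropy of Bernoulli laws *)

(* [y - 1 - ln y - d (y - 1)^2 / 2] has derivative [(y - 1) (1 / y - d)], which has the sign
   of [y - 1] on [(0, 1/d]]. *)
Lemma ln_le_sub_quadratic d y : 0 < d <= 1 -> 0 < y <= / d ->
  ln y <= y - 1 - d / 2 * ((y - 1) * (y - 1)).
Proof.
  intros Hd Hy.
  set (phi := fun w => 0 + 1 * (w - 1) + - (d / 2) * ((w - 1) * (w - 1)) - ln w).
  set (phi' := fun w => 1 + - (d / 2) * (2 * (w - 1)) - / w).
  assert (Hder : forall w, 0 < w -> derivable_pt_lim phi w (phi' w))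
    by (intros w Hw; apply derivable_pt_lim_quadratic_sub, derivable_pt_lim_ln, Hw).
  assert (Hsign : forall c, 0 < c -> c * phi' c = (c - 1) * (1 - d * c))
    by (intros c Hc; unfold phi'; field; lra).
  assert (Hphi1 : phi 1 = 0) by (unfold phi; rewrite ln_1; ring).
  assert (Hdy : d * y <= 1).
  { apply (Rmult_le_reg_l (/ d)); [apply Rinv_0_lt_compat; lra|].
    rewrite <- Rmult_assoc, Rinv_l, Rmult_1_l, Rmult_1_r by lra. lra. }
  assert (phi y >= 0); [|unfold phi in *; lra].
  destruct (Rtotal_order y 1) as [Hlt|[->|Hgt]]; [|lra|].
  - destruct (MVT_cor2 phi phi' y 1 Hlt) as [c [Hc1 Hc2]]; [intros; apply Hder; lra|].
    assert ((c - 1) * (1 - d * c) < 0) by (apply Rmult_neg_pos; nra).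
    assert (phi' c < 0).
    { apply Rnot_le_lt. intro. pose proof (Hsign c ltac:(lra)). nra. }
    assert (phi' c * (1 - y) < 0) by (apply Rmult_neg_pos; lra). lra.
  - destruct (MVT_cor2 phi phi' 1 y Hgt) as [c [Hc1 Hc2]]; [intros; apply Hder; lra|].
    assert (0 < (c - 1) * (1 - d * c)) by (apply Rmult_lt_0_compat; nra).
    assert (0 < phi' c).
    { apply Rnot_le_lt. intro. pose proof (Hsign c ltac:(lra)). nra. }
    assert (0 < phi' c * (y - 1)) by (apply Rmult_lt_0_compat; lra). lra.
Qed.

Lemma mul_ln_ratio_ge d p q : 0 < d <= 1 -> 0 < p -> 0 < q -> q / p <= / d ->
  p - q + d / 2 * ((p - q) * (p - q) / p) <= p * ln (p / q).
Proof.
  intros Hd Hp Hq Hqp.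
  assert (Hpos : 0 < q / p) by (apply Rdiv_lt_0_compat; lra).
  pose proof (ln_le_sub_quadratic d (q / p) Hd (conj Hpos Hqp)) as Hln.
  replace (p / q) with (/ (q / p)) by (field; lra). rewrite ln_Rinv by lra.
  replace (p - q + d / 2 * ((p - q) * (p - q) / p))
    with (p * (- (q / p - 1 - d / 2 * ((q / p - 1) * (q / p - 1))))) by (field; lra).
  apply Rmult_le_compat_l; lra.
Qed.

Lemma bernoulli_entropy_ge d m r : 0 < d <= 1 -> d <= m <= 1 - d -> 0 < r < 1 ->
  d / 2 * ((m - r) * (m - r)) <= m * ln (m / r) + (1 - m) * ln ((1 - m) / (1 - r)).
Proof.
  intros Hd Hm Hr.
  assert (Hinv : forall p q, d <= p -> 0 < q < 1 -> q / p <= / d).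
  { intros p q Hp Hq. apply Rle_trans with (/ p).
    - unfold Rdiv. rewrite <- (Rmult_1_l (/ p)) at 2.
      apply Rmult_le_compat_r; [left; apply Rinv_0_lt_compat|]; lra.
    - apply Rinv_le_contravar; lra. }
  pose proof (mul_ln_ratio_ge d m r Hd ltac:(lra) ltac:(lra) (Hinv m r ltac:(lra) Hr)) as H1.
  pose proof (mul_ln_ratio_ge d (1 - m) (1 - r) Hd ltac:(lra) ltac:(lra)
    (Hinv (1 - m) (1 - r) ltac:(lra) ltac:(lra))) as H2.
  assert (Hsq : 0 <= (m - r) * (m - r)) by apply Rle_0_sqr.
  assert ((m - r) * (m - r) <= (m - r) * (m - r) / m).
  { apply (Rmult_le_reg_l m); [lra|].
    replace (m * ((m - r) * (m - r) / m)) with ((m - r) * (m - r)) by (field; lra). nra. }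
  assert (0 <= (1 - m - (1 - r)) * (1 - m - (1 - r)) / (1 - m))
    by (apply Rmult_le_pos; [nra|left; apply Rinv_0_lt_compat; lra]).
  assert (d / 2 * ((m - r) * (m - r)) <= d / 2 * ((m - r) * (m - r) / m))
    by (apply Rmult_le_compat_l; lra).
  assert (0 <= d / 2 * ((1 - m - (1 - r)) * (1 - m - (1 - r)) / (1 - m)))
    by (apply Rmult_le_pos; lra).
  lra.
Qed.

(** * Covers of intervals and outer measure *)

(* Unlike [sum_f_R0], [sum_first f 0] is the empty sum. *)
Fixpoint sum_first (f : nat -> R) (n : nat) : R :=
  match n with O => 0 | S n => sum_first f n + f n end.

Lemma sum_first_nonneg f n : (forall k, 0 <= f k) -> 0 <= sum_first f n.
Proof. intros H; induction n; simpl; [lra|]. pose proof (H n); lra. Qed.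

Lemma sum_first_ge_term f n k : (forall k, 0 <= f k) -> (k < n)%nat -> f k <= sum_first f n.
Proof.
  intros H Hk; induction n; [lia|]. simpl. destruct (Nat.eq_dec k n) as [->|Hne].
  - pose proof (sum_first_nonneg f n H); lra.
  - assert (f k <= sum_first f n) by (apply IHn; lia). pose proof (H n); lra.
Qed.

Lemma sum_first_ext f g n : (forall k, (k < n)%nat -> f k = g k) -> sum_first f n = sum_first g n.
Proof.
  intros H; induction n; simpl; auto.
  rewrite IHn by (intros; apply H; lia). rewrite H by lia. reflexivity.
Qed.

Lemma sum_first_update f n k0 c : (k0 < n)%nat ->
  sum_first (fun k => if Nat.eqb k k0 then c else f k) n = sum_first f n - f k0 + c.
Proof.
  intros H; induction n; [lia|]. simpl. destruct (Nat.eq_dec k0 n) as [->|Hne].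
  - rewrite Nat.eqb_refl, (sum_first_ext _ f n); [ring|].
    intros k Hk. destruct (Nat.eqb_spec k n); [lia|auto].
  - rewrite IHn by lia. destruct (Nat.eqb_spec n k0); [lia|]. ring.
Qed.

Lemma sum_first_S f n : sum_first f (S n) = sum_f_R0 f n.
Proof. induction n; simpl in *; [lra|]. rewrite <- IHn. reflexivity. Qed.

Lemma sum_first_add f N m :
  sum_first f (N + m) = sum_first f N + sum_first (fun k => f (N + k)%nat) m.
Proof.
  induction m; simpl; [rewrite Nat.add_0_r; ring|].
  rewrite Nat.add_succ_r. simpl. rewrite IHm. ring.
Qed.

Lemma sum_first_telescope (p : nat -> R) r N :
  sum_first (fun k => p (S k) - r - (p k + r)) N = p N - p O - 2 * r * INR N.
Proof. induction N; simpl sum_first; [simpl; ring|]. rewrite IHN, S_INR. ring. Qed.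

(* Drop the interval containing [b]; the others, reindexed by moving the last one into its
   slot, cover [[a, al k0]]. *)
Lemma interval_length_le_cover_sum K : forall (al be : nat -> R) a b,
  (forall k, al k <= be k) -> a <= b ->
  (forall z, a <= z <= b -> exists k, (k < K)%nat /\ al k < z < be k) ->
  b - a <= sum_first (fun k => be k - al k) K.
Proof.
  induction K as [|K IH]; intros al be a b Hle Hab Hcov.
  - destruct (Hcov a) as [k [Hk _]]; [lra|lia].
  - destruct (Hcov b) as [k0 [Hk0 Hb0]]; [lra|].
    assert (Hnn : forall k, 0 <= be k - al k) by (intro k; pose proof (Hle k); lra).
    destruct (Rlt_dec (al k0) a) as [Hlt|Hge].
    + pose proof (sum_first_ge_term (fun k => be k - al k) (S K) k0 Hnn Hk0). simpl in *. lra.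
    + set (al' := fun k => if Nat.eqb k k0 then al K else al k).
      set (be' := fun k => if Nat.eqb k k0 then be K else be k).
      assert (H1 : al k0 - a <= sum_first (fun k => be' k - al' k) K).
      { apply IH.
        - intro k. unfold al', be'. destruct (Nat.eqb k k0); auto.
        - lra.
        - intros z Hz. destruct (Hcov z) as [k [Hk Hzk]]; [lra|].
          destruct (Nat.eq_dec k k0) as [->|Hne]; [lra|].
          destruct (Nat.eq_dec k K) as [->|HneK].
          + exists k0. split; [lia|]. unfold al', be'. rewrite Nat.eqb_refl. auto.
          + exists k. split; [lia|]. unfold al', be'. destruct (Nat.eqb_spec k k0); [lia|auto]. }
      rewrite (sum_first_ext _ (fun k => if Nat.eqb k k0 then be K - al K else be k - al k))
        in H1 by (intros k _; unfold al', be'; destruct (Nat.eqb k k0); auto).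
      simpl. destruct (Nat.eq_dec k0 K) as [->|HneK].
      * rewrite (sum_first_ext _ (fun k => be k - al k) K) in H1; [lra|].
        intros k Hk. destruct (Nat.eqb_spec k K); [lia|auto].
      * rewrite sum_first_update in H1 by lia. lra.
Qed.

Lemma interval_finite_subcover (al be : nat -> R) a b : a <= b ->
  (forall z, a <= z <= b -> exists k, al k < z < be k) ->
  exists K, forall z, a <= z <= b -> exists k, (k < K)%nat /\ al k < z < be k.
Proof.
  intros Hab Hcov.
  apply (real_induction (fun u v => exists K, forall z, u <= z <= v ->
    exists k, (k < K)%nat /\ al k < z < be k)); auto.
  - intros u v w Huvw [K1 H1] [K2 H2]. exists (Nat.max K1 K2). intros z Hz.
    destruct (Rle_dec z v).
    + destruct (H1 z) as [k [Hk Hz']]; [lra|]. exists k; split; [lia|auto].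
    + destruct (H2 z) as [k [Hk Hz']]; [lra|]. exists k; split; [lia|auto].
  - intros y Hy. destruct (Hcov y Hy) as [k0 Hk0].
    exists (Rmin (y - al k0) (be k0 - y)). split; [apply Rmin_pos; lra|].
    pose proof (Rmin_l (y - al k0) (be k0 - y)). pose proof (Rmin_r (y - al k0) (be k0 - y)).
    intros u v Hu Hv. exists (S k0). intros z Hz. exists k0. split; [lia|lra].
Qed.

Lemma outer_le_opp A c : outer_le A c -> outer_le (fun x => A (- x)) c.
Proof.
  intros H eps Heps. destruct (H eps Heps) as [a [b [H1 [H2 H3]]]].
  exists (fun n => - b n), (fun n => - a n). split; [|split].
  - intro n; pose proof (H1 n); lra.
  - intros x Hx. destruct (H2 _ Hx) as [n Hn]. exists n. lra.
  - intro N. rewrite (sum_eq _ (fun n => b n - a n)); auto. intros; ring.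
Qed.

Lemma unbounded_separated_sequence (Q : R -> Prop) gap :
  (forall R0, exists p, R0 <= p /\ Q p) -> forall N, exists p : nat -> R,
    (forall i, (i < N)%nat -> p i + gap <= p (S i)) /\ (forall i, (i <= N)%nat -> Q (p i)).
Proof.
  intros HQ N. induction N as [|N [p [Hp1 Hp2]]].
  - destruct (HQ 0) as [p0 [_ Hp0]]. exists (fun _ => p0). split; [intros; lia|auto].
  - destruct (HQ (p N + gap)) as [q [Hq1 Hq2]].
    exists (fun i => if Nat.leb i N then p i else q). split.
    + intros i Hi. destruct (Nat.leb_spec i N); [|lia]. destruct (Nat.leb_spec (S i) N).
      * apply Hp1; lia.
      * replace i with N by lia. auto.
    + intros i Hi. destruct (Nat.leb_spec i N); auto.
Qed.

Lemma in_interval_or_gap (p : nat -> R) r N z : p O - r <= z <= p N + r ->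
  (exists i, (i <= N)%nat /\ p i - r <= z <= p i + r) \/
  (exists i, (i < N)%nat /\ p i + r < z < p (S i) - r).
Proof.
  revert z. induction N as [|N IH]; intros z Hz.
  - left. exists O. split; auto.
  - destruct (Rle_dec z (p N + r)).
    + destruct (IH z ltac:(lra)) as [[i [Hi Hi2]]|[i [Hi Hi2]]].
      * left. exists i. split; [lia|auto].
      * right. exists i. split; [lia|auto].
    + destruct (Rlt_dec z (p (S N) - r)).
      * right. exists N. split; [lia|lra].
      * left. exists (S N). split; [lia|lra].
Qed.

(* Add the gaps between [N] separated intervals of length [2 r] to a cover of [A]: this covers
   one long interval, so the cover has total length at least [2 r N]. *)
Lemma outer_le_no_far_intervals A c r : outer_le A c -> 0 < r ->
  ~ (forall R0, exists p, R0 <= p /\ forall z, p - r <= z <= p + r -> A z).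
Proof.
  intros Hout Hr Hfar.
  destruct (Hout 1 ltac:(lra)) as [a [b [Hab [Hcov Hsum]]]].
  destruct (INR_unbounded ((c + 1) / (2 * r))) as [N HN].
  destruct (unbounded_separated_sequence _ (2 * r) Hfar N) as [p [Hp1 Hp2]].
  set (al := fun k => if Nat.ltb k N then p k + r else a (k - N)%nat).
  set (be := fun k => if Nat.ltb k N then p (S k) - r else b (k - N)%nat).
  assert (Hmono : forall i, (i <= N)%nat -> p O <= p i).
  { induction i; intros Hi; [lra|].
    pose proof (Hp1 i ltac:(lia)). pose proof (IHi ltac:(lia)). lra. }
  pose proof (Hmono N (le_n _)).
  assert (Hbig : forall z, p O - r <= z <= p N + r -> exists k, al k < z < be k).
  { intros z Hz. destruct (in_interval_or_gap p r N z Hz) as [[i [Hi Hi2]]|[i [Hi Hi2]]].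
    - destruct (Hcov z (Hp2 i Hi z Hi2)) as [n Hn]. exists (N + n)%nat.
      unfold al, be. destruct (Nat.ltb_spec (N + n) N); [lia|].
      replace (N + n - N)%nat with n by lia. auto.
    - exists i. unfold al, be. destruct (Nat.ltb_spec i N); [auto|lia]. }
  destruct (interval_finite_subcover al be (p O - r) (p N + r) ltac:(lra) Hbig) as [K HK].
  assert (Hle : forall k, al k <= be k).
  { intro k. unfold al, be.
    destruct (Nat.ltb_spec k N); [pose proof (Hp1 k ltac:(lia)); lra|apply Hab]. }
  pose proof (interval_length_le_cover_sum (N + K) al be (p O - r) (p N + r) Hle ltac:(lra))
    as Hlen.
  specialize (Hlen ltac:(intros z Hz; destruct (HK z Hz) as [k [Hk Hk2]];
    exists k; split; [lia|auto])).
  rewrite sum_first_add in Hlen.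
  rewrite (sum_first_ext _ (fun k => p (S k) - r - (p k + r)) N) in Hlen
    by (intros k Hk; unfold al, be; destruct (Nat.ltb_spec k N); [auto|lia]).
  rewrite sum_first_telescope in Hlen.
  rewrite (sum_first_ext _ (fun k => b k - a k) K) in Hlen.
  2:{ intros k Hk. unfold al, be. destruct (Nat.ltb_spec (N + k) N); [lia|].
      replace (N + k - N)%nat with k by lia. auto. }
  assert (Hs : sum_first (fun k => b k - a k) K <= c + 1).
  { destruct K; [pose proof (Hsum O); pose proof (Hab O); simpl in *; lra|].
    rewrite sum_first_S. apply Hsum. }
  assert (INR N * (2 * r) > (c + 1) / (2 * r) * (2 * r)) by (apply Rmult_gt_compat_r; lra).
  replace ((c + 1) / (2 * r) * (2 * r)) with (c + 1) in * by (field; lra).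
  lra.
Qed.

(** * The density far from the origin *)

(* If [m] stayed [eps]-far from [rho] at arbitrarily large points, the Lipschitz bound would keep it
   [eps/2]-far on intervals of a fixed length around them, where the entropy density exceeds a
   fixed level: impossible for a level set of finite outer measure. *)
Lemma entropy_finite_level_sets_limit (m g : R -> R) rho d X K :
  0 < d <= 1 -> (forall x, d <= m x <= 1 - d) -> 0 < rho < 1 -> 0 < K ->
  (forall s, 0 < s -> exists c, outer_le (fun x => s < entropy_density m g x) c) ->
  (forall x z, X <= x -> X <= z -> Rabs (m z - m x) <= K * Rabs (z - x)) ->
  (forall x, X <= x -> g x = rho) ->
  forall eps, 0 < eps -> exists R0, forall x, R0 <= x -> Rabs (m x - rho) <= eps.
Proof.
  intros Hd Hm Hrho HK Hout Hlip Hg eps Heps.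
  apply NNPP. intro Hn.
  set (r := eps / (2 * K)).
  assert (Hr : 0 < r) by (unfold r; apply Rdiv_lt_0_compat; lra).
  set (s := d / 2 * ((eps / 2) * (eps / 2)) / 2).
  assert (Hs : 0 < s) by (unfold s; apply Rdiv_lt_0_compat; [apply Rmult_lt_0_compat|]; nra).
  destruct (Hout s Hs) as [c Hc].
  apply (outer_le_no_far_intervals _ c r Hc Hr).
  intros R0. apply NNPP. intro Hn2. apply Hn. exists (Rmax R0 (X + r)). intros x Hx.
  apply Rnot_lt_le. intro Hbad. apply Hn2. exists x.
  pose proof (Rmax_l R0 (X + r)). pose proof (Rmax_r R0 (X + r)).
  split; [lra|]. intros z Hz.
  pose proof (Hlip x z ltac:(lra) ltac:(lra)) as Hl.
  assert (Hzx : K * Rabs (z - x) <= eps / 2).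
  { apply Rle_trans with (K * r); [apply Rmult_le_compat_l; [lra|apply Rabs_le; lra]|].
    unfold r. right. field. lra. }
  assert (Hfar : eps / 2 <= Rabs (m z - rho)).
  { pose proof (Rabs_triang_inv (m x - rho) (m x - m z)) as Htri.
    replace (m x - rho - (m x - m z)) with (m z - rho) in Htri by ring.
    rewrite <- Rabs_Ropp in Hl. replace (- (m z - m x)) with (m x - m z) in Hl by ring. lra. }
  unfold entropy_density. rewrite Hg by lra.
  eapply Rlt_le_trans; [|apply (bernoulli_entropy_ge d); auto].
  assert ((eps / 2) * (eps / 2) <= (m z - rho) * (m z - rho)).
  { replace ((m z - rho) * (m z - rho)) with (Rabs (m z - rho) * Rabs (m z - rho))
      by (rewrite <- Rabs_mult; apply Rabs_pos_eq, Rle_0_sqr).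
    apply Rmult_le_compat; lra. }
  assert (0 < d / 2 * (eps / 2 * (eps / 2))) by (apply Rmult_lt_0_compat; nra).
  assert (d / 2 * (eps / 2 * (eps / 2)) <= d / 2 * ((m z - rho) * (m z - rho)))
    by (apply Rmult_le_compat_l; lra).
  unfold s. lra.
Qed.

Lemma derivative_eq_off_compact (p q : R -> R) lp lq L x :
  (forall z, L < Rabs z -> p z = q z) -> L < Rabs x ->
  derivable_pt_lim p x lp -> derivable_pt_lim q x lq -> lp = lq.
Proof.
  intros Hpq Hx Hp Hq. apply (uniqueness_limite q x); auto.
  apply (derivable_pt_lim_locally_ext p q x (x - (Rabs x - L)) (x + (Rabs x - L))); auto; [lra|].
  intros z Hz. apply Hpq.
  assert (Rabs (x - z) < Rabs x - L) by (apply Rabs_def1; lra).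
  pose proof (Rabs_triang_inv x (x - z)) as Htri.
  replace (x - (x - z)) with z in Htri by ring. lra.
Qed.

Lemma landau_derivative_le_off_compact (f0 f1 f2 f3 : R -> R) L C :
  (forall y, derivable_pt_lim f0 y (f1 y)) -> (forall y, derivable_pt_lim f1 y (f2 y)) ->
  (forall y, derivable_pt_lim f2 y (f3 y)) ->
  (forall a b, Rabs (f0 a - f0 b) <= 1) ->
  (forall y, L < Rabs y -> Rabs (f3 y) <= C) ->
  forall x, L < Rabs x -> Rabs (f1 x) <= (5 + 12 * C) / 2.
Proof.
  intros D0 D1 D2 Hosc Hf3 x Hx.
  (* step away from the origin, so that [[x, x + 2 h]] stays off [[-L, L]] *)
  destruct (Rle_dec 0 x) as [Hx0|Hx0];
    [apply (landau_derivative_le f0 f1 f2 f3 x 1)|apply (landau_derivative_le f0 f1 f2 f3 x (-1))];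
    auto; try (unfold Rabs; destruct Rcase_abs; lra);
    intros y Hy; apply Hf3; revert Hy Hx; unfold between, Rmin, Rmax, Rabs;
    repeat destruct Rle_dec; repeat destruct Rcase_abs; lra.
Qed.

Lemma initial_profile_limit (m m1 g : R -> R) rho_lo rho_hi d K L xlo xhi :
  0 < d <= 1 -> (forall x, d <= m x <= 1 - d) ->
  0 < rho_lo < 1 -> 0 < rho_hi < 1 -> 0 < K ->
  (forall s, 0 < s -> exists c, outer_le (fun x => s < entropy_density m g x) c) ->
  (forall x, x <= xlo -> g x = rho_lo) -> (forall x, xhi <= x -> g x = rho_hi) ->
  (forall y, derivable_pt_lim m y (m1 y)) -> (forall y, L < Rabs y -> Rabs (m1 y) <= K) ->
  forall eps, 0 < eps -> exists R0, forall x, R0 <= Rabs x -> Rabs (m x - g x) <= eps.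
Proof.
  intros Hd Hm Hlo Hhi HK Hout Hglo Hghi Hm1 HK1 eps Heps.
  assert (Hlip : forall a b, (forall y, between a b y -> L < Rabs y) ->
    Rabs (m b - m a) <= K * Rabs (b - a))
    by (intros a b Hab; apply (mvt_abs_le m m1); auto).
  pose proof (Rle_abs L).
  destruct (entropy_finite_level_sets_limit m g rho_hi d (Rmax xhi (Rabs L + 1)) K Hd Hm Hhi HK
    Hout) with (eps := eps) as [Rp HRp]; auto.
  { intros x z Hx Hz. pose proof (Rmax_r xhi (Rabs L + 1)).
    apply Hlip. intros y Hy. revert Hy. unfold between, Rmin, Rmax, Rabs.
    repeat destruct Rle_dec; repeat destruct Rcase_abs; lra. }
  { intros x Hx. pose proof (Rmax_l xhi (Rabs L + 1)). apply Hghi. lra. }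
  destruct (entropy_finite_level_sets_limit (fun x => m (- x)) (fun x => g (- x)) rho_lo d
    (Rmax (- xlo) (Rabs L + 1)) K Hd) with (eps := eps) as [Rm HRm]; auto.
  { intros s Hs. destruct (Hout s Hs) as [c Hc]. exists c. apply (outer_le_opp _ _ Hc). }
  { intros x z Hx Hz. pose proof (Rmax_r (- xlo) (Rabs L + 1)).
    replace (Rabs (z - x)) with (Rabs (- z - - x)) by (rewrite <- Rabs_Ropp; f_equal; ring).
    apply Hlip. intros y Hy. revert Hy. unfold between, Rmin, Rmax, Rabs.
    repeat destruct Rle_dec; repeat destruct Rcase_abs; lra. }
  { intros x Hx. pose proof (Rmax_l (- xlo) (Rabs L + 1)). apply Hglo. lra. }
  exists (Rmax (Rmax Rp Rm) (Rmax xhi (- xlo))). intros x Hx.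
  pose proof (Rmax_l (Rmax Rp Rm) (Rmax xhi (- xlo))).
  pose proof (Rmax_r (Rmax Rp Rm) (Rmax xhi (- xlo))).
  pose proof (Rmax_l Rp Rm). pose proof (Rmax_r Rp Rm).
  pose proof (Rmax_l xhi (- xlo)). pose proof (Rmax_r xhi (- xlo)).
  destruct (Rle_dec 0 x).
  - rewrite Rabs_pos_eq in Hx by lra. rewrite Hghi by lra. apply HRp. lra.
  - rewrite Rabs_left in Hx by lra. rewrite Hglo by lra.
    rewrite <- (Ropp_involutive x). apply HRm. lra.
Qed.

Lemma in_M1_rho_eq_far rho_lo rho_hi gamma : in_M1_rho rho_lo rho_hi gamma ->
  exists X, forall x y, X < Rabs y -> Rabs (x - y) <= Rabs y - X -> gamma x = gamma y.
Proof.
  intros [_ [xlo [xhi [_ [Hlo Hhi]]]]].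
  exists (Rmax (Rabs xlo) (Rabs xhi)). intros x y Hy Hxy.
  pose proof (Rmax_l (Rabs xlo) (Rabs xhi)). pose proof (Rmax_r (Rabs xlo) (Rabs xhi)).
  pose proof (Rle_abs xhi). pose proof (Rle_abs (- xlo)). rewrite Rabs_Ropp in *.
  apply Rabs_le_between in Hxy. pose proof (Rabs_pos xlo).
  destruct (Rle_dec 0 y).
  - rewrite Rabs_pos_eq in * by lra. rewrite !Hhi by lra. reflexivity.
  - rewrite Rabs_left in * by lra. rewrite !Hlo by lra. reflexivity.
Qed.

Lemma initial_slope_off_support (D : nat -> nat -> R -> R -> R) L B :
  (forall k l t x, derivable_pt_lim (fun y => D k l t y) x (D (S k) l t x)) ->
  (forall x, L < Rabs x -> D 0%nat 1%nat 0 x = / 2 * D 2%nat 0%nat 0 x) ->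
  (forall x, 0 <= D 0%nat 0%nat 0 x <= 1) ->
  (forall x, Rabs (D 1%nat 1%nat 0 x) <= B) ->
  forall x, L < Rabs x -> Rabs (D 1%nat 0%nat 0 x) <= (5 + 12 * (2 * B)) / 2.
Proof.
  intros HDx Hheat H01 HB.
  apply (landau_derivative_le_off_compact (D 0%nat 0%nat 0) _ (D 2%nat 0%nat 0) (D 3%nat 0%nat 0));
    auto.
  - intros a b. pose proof (H01 a). pose proof (H01 b). apply Rabs_le. lra.
  - (* differentiating the heat equation: [D 3 0 = 2 D 1 1] off the support *)
    intros x Hx.
    pose proof (derivative_eq_off_compact (fun y => D 0%nat 1%nat 0 y)
      (fun y => / 2 * D 2%nat 0%nat 0 y) _ _ L x Hheat Hx (HDx 0%nat 1%nat 0 x)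
      (derivable_pt_lim_scal _ (/ 2) x _ (HDx 2%nat 0%nat 0 x))) as E.
    pose proof (HB x). rewrite E, Rabs_mult, Rabs_pos_eq in * by lra. lra.
Qed.

Lemma div_square_le_half eps t T : 0 < eps -> 0 <= t <= T ->
  t / ((2 * T / eps + 1) * (2 * T / eps + 1)) <= eps / 2.
Proof.
  intros He Ht. set (D := 2 * T / eps + 1).
  assert (H0 : 0 <= 2 * T / eps) by (apply Rmult_le_pos; [lra|left; apply Rinv_0_lt_compat; lra]).
  assert (HD : 1 <= D) by (unfold D; lra).
  assert (HT2 : eps / 2 * (2 * T / eps) = T) by (field; lra).
  apply (Rmult_le_reg_r (D * D)); [nra|].
  unfold Rdiv at 1. rewrite Rmult_assoc, Rinv_l, Rmult_1_r by nra.
  assert (eps / 2 * (2 * T / eps) <= eps / 2 * D) by (apply Rmult_le_compat_l; unfold D; lra).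
  assert (eps / 2 * D <= eps / 2 * (D * D)) by (apply Rmult_le_compat_l; nra).
  lra.
Qed.

Lemma heat_preserves_far_limit (u ut ux uxx : R -> R -> R) (g : R -> R) T L R X a :
  0 < T -> 0 <= a -> continuous2 u ->
  (forall t x, derivable_pt_lim (fun s => u s x) t (ut t x)) ->
  (forall t x, derivable_pt_lim (fun w => u t w) x (ux t x)) ->
  (forall t x, derivable_pt_lim (fun w => ux t w) x (uxx t x)) ->
  (forall t x, 0 <= t <= T -> L < Rabs x -> ut t x = / 2 * uxx t x) ->
  (forall t x, 0 <= t <= T -> 0 <= u t x <= 1) ->
  (forall x, 0 <= g x <= 1) ->
  (forall x y, X < Rabs y -> Rabs (x - y) <= Rabs y - X -> g x = g y) ->
  (forall x, R <= Rabs x -> Rabs (u 0 x - g x) <= a) ->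
  forall eps, 0 < eps -> exists R0, forall y, R0 < Rabs y ->
    forall t, 0 <= t <= T -> Rabs (u t y - g y) <= a + eps.
Proof.
  intros HT Ha Hu Hut Hux Huxx Hheat Hu01 Hg01 Hgfar Hinit eps Heps.
  set (D0 := 2 * T / eps + 1).
  assert (HD0 : 0 < D0)
    by (unfold D0; pose proof (Rinv_0_lt_compat eps); pose proof (Rmult_le_pos (2 * T) (/ eps));
        lra).
  exists (Rmax R (Rmax X L) + D0). intros y Hy t Ht.
  pose proof (Rmax_l R (Rmax X L)). pose proof (Rmax_r R (Rmax X L)).
  pose proof (Rmax_l X L). pose proof (Rmax_r X L).
  assert (Hbox : forall x, y - D0 <= x <= y + D0 -> R <= Rabs x /\ L < Rabs x /\ g x = g y).
  { intros x Hx. assert (Rabs (x - y) <= D0) by (apply Rabs_le; lra).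
    pose proof (Rabs_triang_inv y (y - x)) as Htri. rewrite (Rabs_minus_sym y x) in Htri.
    replace (y - (y - x)) with x in Htri by ring.
    repeat split; try lra. apply Hgfar; lra. }
  eapply Rle_trans.
  - apply (heat_solution_stays_close u ut ux uxx T y D0 (g y) a); auto.
    + intros s x Hs Hx. apply Hheat; auto. apply Hbox; auto.
    + intros x Hx. destruct (Hbox x Hx) as [HRx [_ <-]]. auto.
  - pose proof (div_square_le_half eps t T Heps Ht) as Hsmall. fold D0 in Hsmall. lra.
Qed.

Theorem lemma2p2 (T rho_lo rho_hi : R) (gamma : R -> R)
  (mu : R -> R -> R) (D : nat -> nat -> R -> R -> R) (Hx : R -> R -> R) :
  0 < T ->
  0 < rho_lo < 1 -> 0 < rho_hi < 1 ->
  in_M1_rho rho_lo rho_hi gamma ->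
  entropy_finite (mu 0) gamma ->
  I0_finite T mu ->
  (* (i) *)
  (exists delta, 0 < delta < 1 /\
     forall t x, 0 <= t <= T -> delta <= mu t x <= 1 - delta) ->
  (* (ii) smoothness, D k l = d_x^k d_t^l mu *)
  smooth_family mu D ->
  (* (iii) *)
  smooth2 Hx -> compact_support_strip T Hx ->
  (forall t x, 0 <= t <= T ->
     derivable_pt_lim (fun y => Hx t y * (mu t y * (1 - mu t y))) x
       (/ 2 * D 2%nat 0%nat t x - D 0%nat 1%nat t x)) ->
  (* (iv) *)
  (forall k l, (1 <= k)%nat -> (1 <= l)%nat ->
     exists B, forall t x, 0 <= t <= T -> Rabs (D k l t x) <= B) ->
  forall eps, 0 < eps -> exists R0, forall y, R0 < Rabs y ->
    forall t, 0 <= t <= T -> Rabs (mu t y - gamma y) <= eps.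
Proof.
  (* only the vanishing of [Hx] off [[-L, L]] is used, not [I0_finite] nor the smoothness of [Hx] *)
  intros HT Hlo Hhi Hgam [_ [Hlev _]] _ [dl [Hdl Hmu]] [HD00 [HDx [HDt HDc]]] _ [L HL] Hpde Hiv
    eps Heps.
  assert (mu = D 0%nat 0%nat) as ->
    by (apply functional_extensionality; intro; apply functional_extensionality; auto).
  clear HD00.
  assert (Hheat : forall t x, 0 <= t <= T -> L < Rabs x ->
    D 0%nat 1%nat t x = / 2 * D 2%nat 0%nat t x).
  { intros t x Ht Hxl. symmetry. apply Rminus_diag_uniq.
    refine (derivative_eq_off_compact _ (fct_cte 0) _ _ L x _ Hxl (Hpde t x Ht)
      (derivable_pt_lim_const 0 x)).
    intros z Hz. unfold fct_cte. rewrite HL by auto. ring. }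
  destruct (Hiv 1%nat 1%nat ltac:(lia) ltac:(lia)) as [B HB].
  pose proof (Rle_trans _ _ _ (Rabs_pos _) (HB 0 0 ltac:(lra))) as HB0.
  destruct (in_M1_rho_eq_far _ _ _ Hgam) as [X HX].
  destruct Hgam as [[_ Hg01] [xlo [xhi [_ [Hglo Hghi]]]]].
  destruct (initial_profile_limit (D 0%nat 0%nat 0) (D 1%nat 0%nat 0) gamma rho_lo rho_hi dl
    ((5 + 12 * (2 * B)) / 2) L xlo xhi) with (eps := eps / 2) as [R HR]; auto; try lra.
  { intro x. apply Hmu. lra. }
  { intros s Hs. destruct (Hlev s Hs) as [v [Hv _]]. exists v. exact Hv. }
  { apply initial_slope_off_support; auto.
    - intros x Hxl. apply Hheat; auto; lra.
    - intro x. pose proof (Hmu 0 x ltac:(lra)). lra.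
    - intro x. apply HB. lra. }
  destruct (heat_preserves_far_limit (D 0%nat 0%nat) (D 0%nat 1%nat) (D 1%nat 0%nat) (D 2%nat 0%nat)
    gamma T L R X (eps / 2)) with (eps := eps / 2) as [R0 HR0]; auto; try lra.
  { intros t x Ht. pose proof (Hmu t x Ht). lra. }
  exists R0. intros y Hy t Ht. replace eps with (eps / 2 + eps / 2) by field. auto.
Qed.
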